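(* For every integer $n\ge0$, every $k\in\mathcal K$ and every pair $s<s'$ in $S$: (1) if $n$ is odd, then $m_{n+1}^{(s'),\dagger}(k)-m_n^{(s'),\dagger}(k)\ge m_{n+1}^{(s),\dagger}(k)-m_n^{(s),\dagger}(k)$; (2) if $n$ is even, then $m_{n+1}^{(s'),\dagger}(k)-m_n^{(s'),\dagger}(k)\le m_{n+1}^{(s),\dagger}(k)-m_n^{(s),\dagger}(k)$.
   Context: Fix a prime $p\ge7$ and $k_0\in\{2,\dots,p\}$. $\{n\}$ is the residue of $n$ mod $p-1$ in $\{0,\dots,p-2\}$. $\mathcal K=\{k\ge2:k\equiv k_0\pmod{p-1}\}$, $k_\bullet=(k-k_0)/(p-1)$. For $s\in\{0,\dots,p-2\}$: $a_s=\{k_0-2-2s\}$, $\delta_s=\lfloor\frac{s+\{a_s+s\}}{p-1}\rfloor$; if $a_s+s<p-1$, $t_1^{(s)}=s+\delta_s$, $t_2^{(s)}=a_s+s+\delta_s+2$; otherwise $t_1^{(s)}=\{a_s+s\}+\delta_s+1$, $t_2^{(s)}=s+\delta_s+1$. For $k\in\mathcal K$: $d_k^{ur,\dagger}(s)=\lfloor\frac{k_\bullet-t_1^{(s)}}{p+1}\rfloor+\lfloor\frac{k_\bullet-t_2^{(s)}}{p+1}\rfloor+2+\delta_s$, $d_k^{Iw,\dagger}=2k_\bullet+2$, and $m_n^{(s),\dagger}(k)=\min\{n-d_k^{ur,\dagger}(s),d_k^{Iw,\dagger}-d_k^{ur,\dagger}(s)-n\}$ if $d_k^{ur,\dagger}(s)<n<d_k^{Iw,\dagger}-d_k^{ur,\dagger}(s)$,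 else $0$. $S=\{\lceil\frac{k_0+1}{2}\rceil,\dots,\lfloor\frac{k_0+p-4}{2}\rfloor\}$. *)

From Stdlib Require Import Bool ZArith Znumtheory.
Open Scope Z_scope.

Definition resid (p n : Z) : Z := n mod (p - 1).

Definition ceil_div (a b : Z) : Z := - ((- a) / b).

Definition a_s (p k0 s : Z) : Z := resid p (k0 - 2 - 2 * s).

Definition delta_s (p k0 s : Z) : Z :=
  (s + resid p (a_s p k0 s + s)) / (p - 1).

Definition t1 (p k0 s : Z) : Z :=
  if a_s p k0 s + s <? p - 1 then s + delta_s p k0 s
  else resid p (a_s p k0 s + s) + delta_s p k0 s + 1.

Definition t2 (p k0 s : Z) : Z :=
  if a_s p k0 s + s <? p - 1 then a_s p k0 s + s + delta_s p k0 s + 2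
  else s + delta_s p k0 s + 1.

Definition inK (p k0 k : Z) : Prop := 2 <= k /\ k mod (p - 1) = k0 mod (p - 1).

Definition kbullet (p k0 k : Z) : Z := (k - k0) / (p - 1).

Definition d_ur (p k0 s k : Z) : Z :=
  (kbullet p k0 k - t1 p k0 s) / (p + 1) + (kbullet p k0 k - t2 p k0 s) / (p + 1)
  + 2 + delta_s p k0 s.

Definition d_Iw (p k0 k : Z) : Z := 2 * kbullet p k0 k + 2.

Definition m_dag (p k0 s n k : Z) : Z :=
  if andb (d_ur p k0 s k <? n) (n <? d_Iw p k0 k - d_ur p k0 s k) then
    Z.min (n - d_ur p k0 s k) (d_Iw p k0 k - d_ur p k0 s k - n)
  else 0.

Definition inS (p k0 s : Z) : Prop :=
  ceil_div (k0 + 1) 2 <= s <= (k0 + p - 4) / 2.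

From Stdlib Require Import ZArith Znumtheory Lia.
Open Scope Z_scope.

(* For s in S both branches defining t1, t2 give the same closed form
   d_ur = (k. - 1 - s) / (p+1) + (k. + 1 - k0 + s) / (p+1) + 2.
   Increasing s moves the two numerators apart while their gap stays in
   [0, p+1], so d_ur changes by at most one: it can only drop to an odd
   value or rise from an even value.  Since m_n is a tent in n supported on
   (d_ur, d_Iw - d_ur) with d_Iw even, moving its left foot from d to d - 1
   (d - 1 odd) raises the increment m_(n+1) - m_n at the odd point n = d - 1
   and lowers it at the even point n = d_Iw - d; rising from an even d is
   the mirror image. *)

Definition tent (L d n : Z) : Z :=
  if andb (d <? n) (n <? L - d) then Z.min (n - d) (L - d - n) else 0.

Definition parity_step (d d' : Z) : Prop :=
  d' = d \/ (d' = d - 1 /\ Z.odd d' = true) \/ (d' = d + 1 /\ Z.even d = true).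

Lemma parity_step_add2 d d' : parity_step d d' -> parity_step (d + 2) (d' + 2).
Proof.
  intros [->|[[-> Hodd]|[-> Heven]]].
  - now left.
  - right; left; split; [lia|].
    now rewrite Z.odd_add, Hodd.
  - right; right; split; [lia|].
    now rewrite Z.even_add, Heven.
Qed.

Lemma tent_increment_parity_step c d d' n : parity_step d d' ->
  (Z.odd n = true ->
     tent (2 * c) d' (n + 1) - tent (2 * c) d' n >=
     tent (2 * c) d (n + 1) - tent (2 * c) d n) /\
  (Z.even n = true ->
     tent (2 * c) d' (n + 1) - tent (2 * c) d' n <=
     tent (2 * c) d (n + 1) - tent (2 * c) d n).
Proof.
  unfold tent; intros Hstep.
  split; intros Hn; [apply Z.odd_spec in Hn | apply Z.even_spec in Hn];
    destruct Hn as [t ->];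
    destruct Hstep as [->|[[-> Hd]|[-> Hd]]];
    try apply Z.odd_spec in Hd; try apply Z.even_spec in Hd;
    try destruct Hd as [u Hu]; try lia;
    repeat match goal with |- context [?x <? ?y] => destruct (Z.ltb_spec x y) end;
    cbn [andb]; lia.
Qed.

Lemma floor_sum_parity_step P X Y X' Y' : 0 < P ->
  X' <= X -> Y <= Y' -> X <= Y <= X + P -> X' <= Y' <= X' + P ->
  parity_step (X / P + Y / P) (X' / P + Y' / P).
Proof.
  intros HP HX HY [HXY HYX] [HXY' HYX'].
  assert (Hsucc : forall Z0, (Z0 + P) / P = Z0 / P + 1).
  { intro Z0; rewrite <- (Z.mul_1_l P) at 1; now rewrite Z.div_add by lia. }
  pose proof (Z.div_le_mono _ _ _ HP HX).
  pose proof (Z.div_le_mono _ _ _ HP HY).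
  pose proof (Z.div_le_mono _ _ _ HP HXY).
  pose proof (Z.div_le_mono _ _ _ HP HXY').
  pose proof (Z.div_le_mono _ _ _ HP HYX) as HYX1.
  pose proof (Z.div_le_mono _ _ _ HP HYX') as HYX1'.
  rewrite Hsucc in HYX1, HYX1'.
  set (a := X / P) in *; set (b := Y / P) in *.
  set (a' := X' / P) in *; set (b' := Y' / P) in *.
  assert (Hcases : (a' = a /\ b' = b) \/ (b = a /\ a' = a /\ b' = a + 1)
                   \/ (b = a /\ a' = a - 1 /\ b' = a)) by lia.
  destruct Hcases as [[-> ->]|[[-> [-> ->]]|[-> [-> ->]]]].
  - now left.
  - right; right; split; [lia|].
    replace (a + a) with (2 * a) by lia; apply Z.even_even.
  - right; left; split; [lia|].
    replace (a - 1 + a) with (2 * (a - 1) + 1) by lia; apply Z.odd_odd.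
Qed.

Lemma inS_bounds p k0 s : 7 <= p -> inS p k0 s ->
  k0 + 1 <= 2 * s /\ 2 * s <= k0 + p - 4.
Proof.
  intros Hp [Hlo Hhi]; unfold ceil_div in Hlo.
  pose proof (Z.div_mod (- (k0 + 1)) 2 ltac:(lia)).
  pose proof (Z.mod_pos_bound (- (k0 + 1)) 2 ltac:(lia)).
  pose proof (Z.div_mod (k0 + p - 4) 2 ltac:(lia)).
  pose proof (Z.mod_pos_bound (k0 + p - 4) 2 ltac:(lia)).
  lia.
Qed.

Lemma d_ur_inS p k0 s k : 7 <= p -> 2 <= k0 <= p -> inS p k0 s ->
  d_ur p k0 s k = (kbullet p k0 k - 1 - s) / (p + 1)
                  + (kbullet p k0 k + 1 - k0 + s) / (p + 1) + 2.
Proof.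
  intros Hp Hk0 HS; destruct (inS_bounds p k0 s Hp HS) as [Hlo Hhi].
  assert (Ha : a_s p k0 s = k0 + p - 3 - 2 * s).
  { unfold a_s, resid; symmetry; apply (Z.mod_unique _ _ (-1)); lia. }
  set (kb := kbullet p k0 k).
  unfold d_ur, t1, t2, delta_s; fold kb; rewrite Ha.
  destruct (Z.le_gt_cases s (k0 - 2)) as [Hs|Hs].
  - assert (Hr : resid p (k0 + p - 3 - 2 * s + s) = k0 - 2 - s).
    { unfold resid; symmetry; apply (Z.mod_unique _ _ 1); lia. }
    assert (Hd : (s + (k0 - 2 - s)) / (p - 1) = 0).
    { symmetry; apply (Z.div_unique _ _ _ (k0 - 2)); lia. }
    rewrite Hr, Hd, (proj2 (Z.ltb_ge _ _)) by lia.
    replace (kb - (k0 - 2 - s + 0 + 1)) with (kb + 1 - k0 + s) by lia.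
    replace (kb - (s + 0 + 1)) with (kb - 1 - s) by lia.
    lia.
  - assert (Hr : resid p (k0 + p - 3 - 2 * s + s) = k0 + p - 3 - s).
    { unfold resid; symmetry; apply (Z.mod_unique _ _ 0); lia. }
    assert (Hd : (s + (k0 + p - 3 - s)) / (p - 1) = 1).
    { symmetry; apply (Z.div_unique _ _ _ (k0 - 2)); lia. }
    rewrite Hr, Hd, (proj2 (Z.ltb_lt _ _)) by lia.
    replace (kb - (s + 1)) with (kb - 1 - s) by lia.
    replace (kb - (k0 + p - 3 - 2 * s + s + 1 + 2))
      with ((kb + 1 - k0 + s) + (-1) * (p + 1)) by lia.
    rewrite Z.div_add by lia.
    lia.
Qed.

Lemma d_ur_parity_step p k0 s s' k : 7 <= p -> 2 <= k0 <= p ->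
  inS p k0 s -> inS p k0 s' -> s < s' ->
  parity_step (d_ur p k0 s k) (d_ur p k0 s' k).
Proof.
  intros Hp Hk0 HS HS' Hss.
  pose proof (inS_bounds p k0 s Hp HS); pose proof (inS_bounds p k0 s' Hp HS').
  rewrite !d_ur_inS by assumption.
  apply parity_step_add2, floor_sum_parity_step; lia.
Qed.

Theorem mainTheorem11 (p k0 : Z) :
  prime p -> 7 <= p -> 2 <= k0 <= p ->
  forall (n k s s' : Z), 0 <= n -> inK p k0 k ->
    inS p k0 s -> inS p k0 s' -> s < s' ->
    (Z.odd n = true ->
       m_dag p k0 s' (n + 1) k - m_dag p k0 s' n k >=
       m_dag p k0 s (n + 1) k - m_dag p k0 s n k) /\
    (Z.even n = true ->
       m_dag p k0 s' (n + 1) k - m_dag p k0 s' n k <=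
       m_dag p k0 s (n + 1) k - m_dag p k0 s n k).
Proof.
  intros _ Hp Hk0 n k s s' _ _ HS HS' Hss.
  change (m_dag p k0 ?t ?m k) with (tent (d_Iw p k0 k) (d_ur p k0 t k) m).
  replace (d_Iw p k0 k) with (2 * (kbullet p k0 k + 1)) by (unfold d_Iw; lia).
  apply tent_increment_parity_step, d_ur_parity_step; assumption.
Qed.
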